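(* The forgetful functor $U:\mathbf{Exp}\to\omega\mathbf{Cat}$ admits a left adjoint.
   Context: All $\omega$-categories are strict and globular; $\omega\mathbf{Cat}$ is the category of strict $\omega$-categories and strict $\omega$-functors. For an $n$-cell $x$ and $i\le n$, $s_i(x),t_i(x)$ are its iterated $i$-dimensional source and target ($s_n(x)=t_n(x)=x$, $s(x)=s_{n-1}(x)$, $t(x)=t_{n-1}(x)$). $y\star_p x$ is the $p$-composite (defined when $t_p(x)=s_p(y)$), $1_u$ the identity on $u$; lower-dimensional cells in composites stand for their iterated identities; composites are bracketed giving priority to the lowest-dimensional composition ($z\star_p y\star_q x=(z\star_p y)\star_q x$ if $p\le q$, $z\star_p(y\star_q x)$ if $p\ge q$). An expansion on an $\omega$-category $C$ consists of a $0$-cell $o$ (the origin) and, for each $n$-cell $x$ of $C$, an $(n+1)$-cell $\xi_x$ with $\xi_x:o\to x$ if $n=0$ and $\xi_x:\xi_{t(x)}\to x\star_0\xi_{s_0(x)}\star_1\cdots\star_{n-1}\xi_{s_{n-1}(x)}$ if $n>0$, such that for all $n>p$, all $n$-cells $x,y$ with $t_p(x)=s_p(y)$ and all cells $u$: $\xi_{y\star_p x}=t_{p+1}(y)\star_0\xi_{s_0(x)}\star_1\cdots\star_{p-1}\xi_{s_{p-1}(x)}\star_p\xi_x\star_{p+1}\xi_y$, $\xi_{1_u}=1_{\xi_u}$, $\xi_{\xi_u}=1_{\xi_u}$, and $\xi_o=1_o$. (Equivalently: an oplax transformation from the constant $\omega$-functor at $o$ to the identity of $C$ with these degeneracy conditions.)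 $\mathbf{Exp}$ is the category whose objects are $\omega$-categories with an expansion $(C,o,\xi)$ and whose morphisms are $\omega$-functors $f$ with $f(o)=o$ and $f(\xi_x)=\xi_{f(x)}$ for every cell $x$; $U$ forgets the expansion. *)

From mathcomp Require Import ssreflect ssrfun ssrbool eqtype ssrnat.

Set Implicit Arguments.
Unset Strict Implicit.
Unset Printing Implicit Defensive.

(* A globular set with identities and compositions, presented as the
   disjoint union of the sets of n-cells graded by [dim].  [src]/[tgt]
   are meaningful on cells of positive dimension only; [comp p y x]
   (= y *_p x) is meaningful only when x, y are p-composable. *)
Record wdata := WData {
  cell : Type;
  dim : cell -> nat;
  src : cell -> cell;
  tgt : cell -> cell;
  idc : cell -> cell;
  comp : nat -> cell -> cell -> cell
}.

Section Ops.
Variable C : wdata.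

Definition sI (i : nat) (x : cell C) : cell C := iter (dim x - i) (@src C) x.
Definition tI (i : nat) (x : cell C) : cell C := iter (dim x - i) (@tgt C) x.

Definition idn (n : nat) (u : cell C) : cell C := iter (n - dim u) (@idc C) u.

Definition composable (p : nat) (x y : cell C) : Prop :=
  dim x = dim y /\ p < dim x /\ tI p x = sI p y.

Definition is_wcat : Prop :=
  (forall x : cell C, 0 < dim x -> dim (src x) = (dim x).-1 /\ dim (tgt x) = (dim x).-1) /\
  (forall x : cell C, 1 < dim x -> src (src x) = src (tgt x) /\ tgt (src x) = tgt (tgt x)) /\
  (forall u : cell C, dim (idc u) = (dim u).+1 /\ src (idc u) = u /\ tgt (idc u) = u) /\
  (forall p x y, composable p x y -> dim (comp p y x) = dim x) /\
  (forall p x y, composable p x y -> dim x = p.+1 ->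
      src (comp p y x) = src x /\ tgt (comp p y x) = tgt y) /\
  (forall p x y, composable p x y -> p.+1 < dim x ->
      src (comp p y x) = comp p (src y) (src x) /\
      tgt (comp p y x) = comp p (tgt y) (tgt x)) /\
  (forall p x, p < dim x ->
      comp p x (idn (dim x) (sI p x)) = x /\
      comp p (idn (dim x) (tI p x)) x = x) /\
  (forall p x y z, composable p x y -> composable p y z ->
      comp p z (comp p y x) = comp p (comp p z y) x) /\
  (forall p q x x' y y', p < q ->
      composable q x x' -> composable q y y' ->
      composable p x y -> composable p x' y' ->
      comp p (comp q y' y) (comp q x' x) = comp q (comp p y' x') (comp p y x)) /\
  (forall p x y, composable p x y -> idc (comp p y x) = comp p (idc y) (idc x)).

End Ops.

Record wcat := WCat { wd :> wdata; wcat_ax : is_wcat wd }.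

Definition is_wfunctor (C D : wdata) (f : cell C -> cell D) : Prop :=
  (forall x, dim (f x) = dim x) /\
  (forall x, 0 < dim x -> f (src x) = src (f x) /\ f (tgt x) = tgt (f x)) /\
  (forall u, f (idc u) = idc (f u)) /\
  (forall p x y, composable p x y -> f (comp p y x) = comp p (f y) (f x)).

Record wfunctor (C D : wcat) := WFun {
  wfun :> cell C -> cell D;
  wfun_ax : is_wfunctor wfun }.

Section Expansion.
Variable C : wdata.
Variables (o : cell C) (xi : cell C -> cell C).

(* whisk N c x k = c *_0 xi_{s_0 x} *_1 ... *_{k-1} xi_{s_{k-1} x}
   (left-bracketed, every cell padded by identities to dimension N) *)
Fixpoint whisk (N : nat) (c x : cell C) (k : nat) : cell C :=
  match k with
  | 0 => idn N c
  | k'.+1 => comp k' (whisk N c x k') (idn N (xi (sI k' x)))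
  end.

Definition is_expansion : Prop :=
  dim o = 0 /\
  (forall x, dim (xi x) = (dim x).+1) /\
  (forall x, dim x = 0 -> src (xi x) = o /\ tgt (xi x) = x) /\
  (forall x, 0 < dim x ->
      src (xi x) = xi (tgt x) /\ tgt (xi x) = whisk (dim x) x x (dim x)) /\
  (forall p x y, composable p x y ->
      xi (comp p y x) =
      comp p.+1 (comp p (whisk (dim x).+1 (tI p.+1 y) x p) (xi x)) (xi y)) /\
  (forall u, xi (idc u) = idc (xi u)) /\
  (forall u, xi (xi u) = idc (xi u)) /\
  xi o = idc o.

End Expansion.

Record expansion := Expansion {
  ecat :> wcat;
  orig : cell ecat;
  xi : cell ecat -> cell ecat;
  exp_ax : is_expansion orig xi }.

Definition U (E : expansion) : wcat := ecat E.

Record expmor (E F : expansion) := ExpMor {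
  emor :> wfunctor (U E) (U F);
  emor_orig : emor (orig E) = orig F;
  emor_xi : forall x, emor (xi x) = xi (emor x) }.

(* The free expansion on C is a term model. Terms are built from the cells of
   C with a formal origin, xi, source, target, identity and composition; a term
   is defined when its composites are formally well typed, and two terms are
   identified when they have the same formal dimension and the same value in
   every expansion E under every omega-functor C -> E. The omega-category and
   expansion laws then hold among classes because they hold in each E, and
   evaluation of representatives is the unique morphism extending a given
   functor. The one combinatorial input is that the whiskering occurring in the
   composition axiom for xi is well typed in any expansion, which follows from
   the target axiom for xi by induction on the whiskering stages. *)

From mathcomp Require Import ssreflect ssrfun ssrbool eqtype ssrnat zify.
From Stdlib Require Import ClassicalEpsilon ProofIrrelevance FunctionalExtensionality PropExtensionality.

Set Implicit Arguments.
Unset Strict Implicit.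
Unset Printing Implicit Defensive.

Section OmegaCategoryAxioms.
Variable D : wcat.
Implicit Types x y z u : cell D.

Lemma dim_src x : 0 < dim x -> dim (src x) = (dim x).-1.
Proof. by move=> hx; case: (wcat_ax D) => H _; case: (H x hx). Qed.
Lemma dim_tgt x : 0 < dim x -> dim (tgt x) = (dim x).-1.
Proof. by move=> hx; case: (wcat_ax D) => H _; case: (H x hx). Qed.
Lemma src_src x : 1 < dim x -> src (src x) = src (tgt x).
Proof. by move=> hx; case: (wcat_ax D) => _ [H _]; case: (H x hx). Qed.
Lemma tgt_src x : 1 < dim x -> tgt (src x) = tgt (tgt x).
Proof. by move=> hx; case: (wcat_ax D) => _ [H _]; case: (H x hx). Qed.
Lemma dim_idc u : dim (idc u) = (dim u).+1.
Proof. by case: (wcat_ax D) => _ [_ [H _]]; case: (H u). Qed.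
Lemma src_idc u : src (idc u) = u.
Proof. by case: (wcat_ax D) => _ [_ [H _]]; case: (H u) => _ []. Qed.
Lemma tgt_idc u : tgt (idc u) = u.
Proof. by case: (wcat_ax D) => _ [_ [H _]]; case: (H u) => _ []. Qed.
Lemma dim_comp p x y : composable p x y -> dim (comp p y x) = dim x.
Proof. by case: (wcat_ax D) => _ [_ [_ [H _]]]; apply: H. Qed.
Lemma src_comp_top p x y : composable p x y -> dim x = p.+1 -> src (comp p y x) = src x.
Proof. by move=> hc hd; case: (wcat_ax D) => _ [_ [_ [_ [H _]]]]; case: (H p x y hc hd). Qed.
Lemma tgt_comp_top p x y : composable p x y -> dim x = p.+1 -> tgt (comp p y x) = tgt y.
Proof. by move=> hc hd; case: (wcat_ax D) => _ [_ [_ [_ [H _]]]]; case: (H p x y hc hd). Qed.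
Lemma src_comp p x y : composable p x y -> p.+1 < dim x ->
  src (comp p y x) = comp p (src y) (src x).
Proof. by move=> hc hd; case: (wcat_ax D) => _ [_ [_ [_ [_ [H _]]]]]; case: (H p x y hc hd). Qed.
Lemma tgt_comp p x y : composable p x y -> p.+1 < dim x ->
  tgt (comp p y x) = comp p (tgt y) (tgt x).
Proof. by move=> hc hd; case: (wcat_ax D) => _ [_ [_ [_ [_ [H _]]]]]; case: (H p x y hc hd). Qed.
Lemma comp_idn_r p x : p < dim x -> comp p x (idn (dim x) (sI p x)) = x.
Proof. by move=> hp; case: (wcat_ax D) => _ [_ [_ [_ [_ [_ [H _]]]]]]; case: (H p x hp). Qed.
Lemma comp_idn_l p x : p < dim x -> comp p (idn (dim x) (tI p x)) x = x.
Proof. by move=> hp; case: (wcat_ax D) => _ [_ [_ [_ [_ [_ [H _]]]]]]; case: (H p x hp). Qed.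
Lemma compA p x y z : composable p x y -> composable p y z ->
  comp p z (comp p y x) = comp p (comp p z y) x.
Proof. by case: (wcat_ax D) => _ [_ [_ [_ [_ [_ [_ [H _]]]]]]]; apply: H. Qed.
Lemma comp_interchange p q x x' y y' : p < q ->
  composable q x x' -> composable q y y' -> composable p x y -> composable p x' y' ->
  comp p (comp q y' y) (comp q x' x) = comp q (comp p y' x') (comp p y x).
Proof. by case: (wcat_ax D) => _ [_ [_ [_ [_ [_ [_ [_ [H _]]]]]]]]; apply: H. Qed.
Lemma idc_comp p x y : composable p x y -> idc (comp p y x) = comp p (idc y) (idc x).
Proof. by case: (wcat_ax D) => _ [_ [_ [_ [_ [_ [_ [_ [_ H]]]]]]]]; apply: H. Qed.

End OmegaCategoryAxioms.

(** * Iterated boundaries *)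

Section IteratedBoundaries.
Variable D : wcat.
Implicit Types x y u : cell D.

Lemma dim_iter_src k x : k <= dim x -> dim (iter k (@src D) x) = dim x - k.
Proof.
elim: k => [|k IH] hk /=; first by rewrite subn0.
rewrite dim_src IH; lia.
Qed.
Lemma dim_iter_tgt k x : k <= dim x -> dim (iter k (@tgt D) x) = dim x - k.
Proof.
elim: k => [|k IH] hk /=; first by rewrite subn0.
rewrite dim_tgt IH; lia.
Qed.
Lemma dim_sI i x : i <= dim x -> dim (sI i x) = i.
Proof. by move=> h; rewrite /sI dim_iter_src; lia. Qed.
Lemma dim_tI i x : i <= dim x -> dim (tI i x) = i.
Proof. by move=> h; rewrite /tI dim_iter_tgt; lia. Qed.
Lemma dim_iter_idc k u : dim (iter k (@idc D) u) = dim u + k.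
Proof. by elim: k => [|k IH] /=; rewrite ?addn0 // dim_idc IH addnS. Qed.
Lemma dim_idn n u : dim u <= n -> dim (idn n u) = n.
Proof. by move=> h; rewrite /idn dim_iter_idc; lia. Qed.

Lemma iter_src_idc a b u : iter a (@src D) (iter (a + b) (@idc D) u) = iter b (@idc D) u.
Proof. by elim: a => [|a IH] //; rewrite iterSr addSn iterS src_idc IH. Qed.
Lemma iter_tgt_idc a b u : iter a (@tgt D) (iter (a + b) (@idc D) u) = iter b (@idc D) u.
Proof. by elim: a => [|a IH] //; rewrite iterSr addSn iterS tgt_idc IH. Qed.

Lemma sI_small i x : dim x <= i -> sI i x = x.
Proof. by move=> h; rewrite /sI (_ : dim x - i = 0) //; lia. Qed.
Lemma tI_small i x : dim x <= i -> tI i x = x.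
Proof. by move=> h; rewrite /tI (_ : dim x - i = 0) //; lia. Qed.
Lemma idn_small n x : n <= dim x -> idn n x = x.
Proof. by move=> h; rewrite /idn (_ : n - dim x = 0) //; lia. Qed.

Lemma sI_idn j N u : dim u <= N -> j <= N -> sI j (idn N u) = idn j (sI j u).
Proof.
move=> h1 h2; rewrite /sI dim_idn // /idn.
case: (leqP (dim u) j) => h3.
  rewrite (_ : dim u - j = 0) /=; last lia.
  by rewrite (_ : N - dim u = (N - j) + (j - dim u)) ?iter_src_idc //; lia.
rewrite dim_iter_src; last lia.
rewrite (_ : j - (dim u - (dim u - j)) = 0) /=; last lia.
rewrite (_ : N - j = (dim u - j) + (N - dim u)); last lia.
by rewrite iterD -{2}(addn0 (N - dim u)) iter_src_idc.
Qed.
Lemma tI_idn j N u : dim u <= N -> j <= N -> tI j (idn N u) = idn j (tI j u).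
Proof.
move=> h1 h2; rewrite /tI dim_idn // /idn.
case: (leqP (dim u) j) => h3.
  rewrite (_ : dim u - j = 0) /=; last lia.
  by rewrite (_ : N - dim u = (N - j) + (j - dim u)) ?iter_tgt_idc //; lia.
rewrite dim_iter_tgt; last lia.
rewrite (_ : j - (dim u - (dim u - j)) = 0) /=; last lia.
rewrite (_ : N - j = (dim u - j) + (N - dim u)); last lia.
by rewrite iterD -{2}(addn0 (N - dim u)) iter_tgt_idc.
Qed.

Lemma sI_src i x : i < dim x -> sI i (src x) = sI i x.
Proof.
move=> h; rewrite /sI dim_src; last lia.
by rewrite (_ : dim x - i = ((dim x).-1 - i).+1) ?iterSr //; lia.
Qed.
Lemma tI_tgt i x : i < dim x -> tI i (tgt x) = tI i x.
Proof.
move=> h; rewrite /tI dim_tgt; last lia.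
by rewrite (_ : dim x - i = ((dim x).-1 - i).+1) ?iterSr //; lia.
Qed.
Lemma tI_src i x : i.+1 < dim x -> tI i (src x) = tI i x.
Proof.
move=> h; rewrite /tI dim_src; last lia.
rewrite (_ : dim x - i = ((dim x).-1 - i).-1.+2); last lia.
rewrite (_ : (dim x).-1 - i = ((dim x).-1 - i).-1.+1); last lia.
by rewrite !iterSr tgt_src //; lia.
Qed.
Lemma sI_tgt i x : i.+1 < dim x -> sI i (tgt x) = sI i x.
Proof.
move=> h; rewrite /sI dim_tgt; last lia.
rewrite (_ : dim x - i = ((dim x).-1 - i).-1.+2); last lia.
rewrite (_ : (dim x).-1 - i = ((dim x).-1 - i).-1.+1); last lia.
by rewrite !iterSr src_src //; lia.
Qed.

Lemma sI_sI i j x : i <= j -> j <= dim x -> sI i (sI j x) = sI i x.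
Proof. by move=> h1 h2; rewrite {1}/sI dim_sI // /sI -iterD; congr iter; lia. Qed.
Lemma tI_tI i j x : i <= j -> j <= dim x -> tI i (tI j x) = tI i x.
Proof. by move=> h1 h2; rewrite {1}/tI dim_tI // /tI -iterD; congr iter; lia. Qed.

Lemma sI_tI i j x : i < j -> j <= dim x -> sI i (tI j x) = sI i x.
Proof.
move=> h1; move: {2}(dim x - j) (erefl (dim x - j)) => d.
elim: d x => [|d IH] x hd h2; first by rewrite tI_small //; lia.
rewrite -tI_tgt; last lia.
rewrite IH ?dim_tgt; try lia.
by rewrite sI_tgt //; lia.
Qed.

Lemma composable_src p x y : composable p x y -> p.+1 < dim x ->
  composable p (src x) (src y).
Proof.
case=> e [h1 h2] h3; split; first by rewrite !dim_src -?e //; lia.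
split; first by rewrite dim_src //; lia.
by rewrite tI_src // sI_src // -e; lia.
Qed.
Lemma composable_tgt p x y : composable p x y -> p.+1 < dim x ->
  composable p (tgt x) (tgt y).
Proof.
case=> e [h1 h2] h3; split; first by rewrite !dim_tgt -?e //; lia.
split; first by rewrite dim_tgt //; lia.
by rewrite tI_tgt // sI_tgt // -e; lia.
Qed.

Lemma bd_comp_above p j x y : composable p x y -> p < j -> j <= dim x ->
  sI j (comp p y x) = comp p (sI j y) (sI j x) /\
  tI j (comp p y x) = comp p (tI j y) (tI j x).
Proof.
move=> hc h1; move: {2}(dim x - j) (erefl (dim x - j)) => d.
elim: d x y hc => [|d IH] x y hc hd h2; have e := hc.1.
  by rewrite !sI_small ?tI_small ?dim_comp //; lia.
have h3 : p.+1 < dim x by lia.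
rewrite -sI_src ?dim_comp //; last lia.
rewrite -tI_tgt ?dim_comp //; last lia.
rewrite src_comp // tgt_comp //.
have [A _] := IH _ _ (composable_src hc h3) ltac:(rewrite dim_src; lia) ltac:(rewrite dim_src; lia).
have [_ B] := IH _ _ (composable_tgt hc h3) ltac:(rewrite dim_tgt; lia) ltac:(rewrite dim_tgt; lia).
by rewrite A B !sI_src ?tI_tgt -?e //; lia.
Qed.

Lemma tI_comp_at p x y : composable p x y -> tI p (comp p y x) = tI p y.
Proof.
move=> hc; move: {2}(dim x - p.+1) (erefl (dim x - p.+1)) => d.
elim: d x y hc => [|d IH] x y hc hd; have [e [h1 h2]] := hc.
  have h3 : dim x = p.+1 by lia.
  by rewrite /tI dim_comp // -e h3 subSnn /= tgt_comp_top.
have h3 : p.+1 < dim x by lia.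
rewrite -(tI_tgt (x := comp p y x)); last by rewrite dim_comp //; lia.
rewrite tgt_comp // IH ?dim_tgt ?tI_tgt -?e //; try lia.
exact: composable_tgt.
Qed.

Lemma tI_comp_below p j x y : composable p x y -> j <= p -> tI j (comp p y x) = tI j y.
Proof.
move=> hc h; have [e [h1 h2]] := hc.
rewrite -(tI_tI (j := p) (x := comp p y x)) ?dim_comp //; last lia.
by rewrite tI_comp_at // tI_tI //; lia.
Qed.

End IteratedBoundaries.

(** * Whiskerings in an expansion *)

Lemma whiskS (D : wdata) (xi : cell D -> cell D) N c x k :
  whisk xi N c x k.+1 = comp k (whisk xi N c x k) (idn N (xi (sI k x))).
Proof. by []. Qed.

Section ExpansionAxioms.
Variables (D : wcat) (o : cell D) (xi : cell D -> cell D).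
Hypothesis Hxi : is_expansion o xi.
Implicit Types x y u : cell D.

Lemma dim_orig : dim o = 0.
Proof. by case: Hxi. Qed.
Lemma dim_xi u : dim (xi u) = (dim u).+1.
Proof. by case: Hxi => _ []. Qed.
Lemma src_xi0 u : dim u = 0 -> src (xi u) = o.
Proof. by move=> h; case: Hxi => _ [_ [H _]]; case: (H u h). Qed.
Lemma tgt_xi0 u : dim u = 0 -> tgt (xi u) = u.
Proof. by move=> h; case: Hxi => _ [_ [H _]]; case: (H u h). Qed.
Lemma src_xi u : 0 < dim u -> src (xi u) = xi (tgt u).
Proof. by move=> h; case: Hxi => _ [_ [_ [H _]]]; case: (H u h). Qed.
Lemma tgt_xi u : tgt (xi u) = whisk xi (dim u) u u (dim u).
Proof.
case: (posnP (dim u)) => h; last by case: Hxi => _ [_ [_ [H _]]]; case: (H u h).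
by rewrite tgt_xi0 // h.
Qed.
Lemma xi_comp p x y : composable p x y ->
  xi (comp p y x) = comp p.+1 (comp p (whisk xi (dim x).+1 (tI p.+1 y) x p) (xi x)) (xi y).
Proof. by case: Hxi => _ [_ [_ [_ [H _]]]]; apply: H. Qed.
Lemma xi_idc u : xi (idc u) = idc (xi u).
Proof. by case: Hxi => _ [_ [_ [_ [_ [H _]]]]]. Qed.
Lemma xi_xi u : xi (xi u) = idc (xi u).
Proof. by case: Hxi => _ [_ [_ [_ [_ [_ [H _]]]]]]. Qed.
Lemma xi_orig : xi o = idc o.
Proof. by case: Hxi => _ [_ [_ [_ [_ [_ [_ H]]]]]]. Qed.

Definition whisk_composable N c x k :=
  forall j, j < k -> composable j (idn N (xi (sI j x))) (whisk xi N c x j).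

Lemma whisk_composable_le N c x k k' : k' <= k ->
  whisk_composable N c x k -> whisk_composable N c x k'.
Proof. by move=> h h1 j hj; apply: h1; lia. Qed.

Lemma eq_whisk N c x x' k : (forall j, j < k -> sI j x = sI j x') ->
  whisk xi N c x k = whisk xi N c x' k.
Proof. by elim: k => [|k IH] h //=; rewrite IH ?h // => j hj; apply: h; lia. Qed.

Lemma dim_whisk N c x k : dim c <= N -> k <= N -> k <= dim x ->
  whisk_composable N c x k -> dim (whisk xi N c x k) = N.
Proof.
case: k => [|k] h1 h2 h3 h4 /=; first by rewrite dim_idn.
rewrite dim_comp; last exact: h4.
by rewrite dim_idn // dim_xi dim_sI //; lia.
Qed.

Lemma bd_whisk N c x k j : k <= j -> j <= N -> dim c <= N -> k <= dim x ->
  whisk_composable N c x k ->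
  sI j (whisk xi N c x k) = whisk xi j (sI j c) x k /\
  tI j (whisk xi N c x k) = whisk xi j (tI j c) x k.
Proof.
elim: k => [|k IH] h1 h2 h3 h4 h5 /=; first by rewrite sI_idn // tI_idn.
have hc := h5 k (ltnSn k).
have hdz : dim (xi (sI k x)) = k.+1 by rewrite dim_xi dim_sI //; lia.
have [A B] := bd_comp_above hc (j := j) ltac:(lia) ltac:(rewrite dim_idn; lia).
have [IA IB] := IH ltac:(lia) h2 h3 ltac:(lia) (whisk_composable_le (leqnSn k) h5).
by rewrite A B IA IB sI_idn ?tI_idn ?(sI_small (x := xi _)) ?(tI_small (x := xi _)) //; lia.
Qed.

Lemma tI_whisk N c x k j : j <= k -> whisk_composable N c x k ->
  tI j (whisk xi N c x k) = tI j (whisk xi N c x j).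
Proof.
elim: k => [|k IH] h1 h2; first by rewrite (_ : j = 0) //; lia.
case: (eqVneq j k.+1) => [-> //|hne].
rewrite /= (tI_comp_below (h2 k (ltnSn k))); last lia.
by apply: IH; [lia | exact: whisk_composable_le (leqnSn k) h2].
Qed.

(* The stages of a whiskering are composable because tgt (xi (s_k x)) is itself
   the k-th whiskering of s_k x. *)
Lemma whisk_composable_of_sI N c x k : dim c <= N -> k <= N -> k <= dim x ->
  (forall j, j < k -> sI j c = sI j x) -> whisk_composable N c x k.
Proof.
elim: k => [|k IH] h1 h2 h3 h4; first by move=> j; rewrite ltn0.
have IH' := IH h1 ltac:(lia) ltac:(lia) ltac:(move=> j hj; apply: h4; lia).
move=> j hj; case: (eqVneq j k) => [->|hne]; last by apply: IH'; lia.
have hds : dim (sI k x) = k by rewrite dim_sI //; lia.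
have hdz : dim (xi (sI k x)) = k.+1 by rewrite dim_xi hds.
split; first by rewrite dim_idn ?dim_whisk //; lia.
split; first by rewrite dim_idn //; lia.
rewrite tI_idn; [|lia|lia].
rewrite {1}/tI hdz subSnn /= idn_small; last by rewrite dim_tgt hdz.
have [A _] := @bd_whisk N c x k k (leqnn k) ltac:(lia) h1 ltac:(lia) IH'.
rewrite tgt_xi A h4 // hds; apply: eq_whisk => j0 hj0; rewrite sI_sI //; lia.
Qed.

Lemma tI_xi j u : j <= dim u -> tI j (xi u) = tI j (tgt (xi u)).
Proof. by move=> h; rewrite /tI dim_tgt dim_xi // subSn // iterSr. Qed.

Lemma xi_comp_composable p x y : composable p x y ->
  whisk_composable (dim x).+1 (tI p.+1 y) x p /\
  composable p (xi x) (whisk xi (dim x).+1 (tI p.+1 y) x p).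
Proof.
move=> hc; have [e [h1 h2]] := hc.
set c := tI p.+1 y.
have hsc j : j < p -> sI j c = sI j x.
  move=> hj; rewrite sI_tI; [|lia|lia].
  rewrite -(sI_sI (j := p) (x := y)); [|lia|lia].
  by rewrite -h2 sI_tI //; lia.
have okW : whisk_composable (dim x).+1 c x p.
  by apply: whisk_composable_of_sI => //; rewrite ?dim_tI; lia.
have okx : whisk_composable (dim x) x x (dim x) by apply: whisk_composable_of_sI.
split=> //; split; first by rewrite dim_xi dim_whisk // ?dim_tI; lia.
split; first by rewrite dim_xi; lia.
rewrite tI_xi ?tgt_xi; last lia.
rewrite tI_whisk //; last lia.
have [_ B] := @bd_whisk (dim x) x x p p (leqnn p) ltac:(lia) (leqnn _) ltac:(lia)
  (whisk_composable_le (ltnW h1) okx).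
have [A _] := @bd_whisk (dim x).+1 c x p p (leqnn p) ltac:(lia) ltac:(rewrite dim_tI; lia) ltac:(lia) okW.
by rewrite A B sI_tI ?h2 //; lia.
Qed.

End ExpansionAxioms.

(** * Quotients by a Prop-valued equivalence *)

Section Quotient.
Variables (T : Type) (R : T -> T -> Prop) (Def : T -> Prop) (t0 : T).
Hypotheses (R_refl : forall t, R t t) (R_sym : forall t u, R t u -> R u t)
  (R_trans : forall t u v, R t u -> R u v -> R t v)
  (Def_R : forall t u, Def t -> R t u -> Def u) (Def_t0 : Def t0).

Definition quot := {P : T -> Prop | exists t, Def t /\ P = R t}.

(* Undefined elements are sent to the junk class of [t0]. *)
Definition pi (t : T) : quot :=
  match excluded_middle_informative (Def t) with
  | left h => exist _ (R t) (ex_intro _ t (conj h erefl))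
  | right _ => exist _ (R t0) (ex_intro _ t0 (conj Def_t0 erefl))
  end.

Definition repr (X : quot) : T :=
  proj1_sig (constructive_indefinite_description _ (proj2_sig X)).

Lemma repr_spec X : Def (repr X) /\ proj1_sig X = R (repr X).
Proof. exact: proj2_sig (constructive_indefinite_description _ (proj2_sig X)). Qed.

Lemma quot_ext (X Y : quot) : proj1_sig X = proj1_sig Y -> X = Y.
Proof. by case: X Y => P HP [Q HQ] /= e; subst Q; congr exist; apply: proof_irrelevance. Qed.

Lemma val_pi t : Def t -> proj1_sig (pi t) = R t.
Proof. by rewrite /pi; case: excluded_middle_informative. Qed.

Lemma pi_eq t u : R t u -> pi t = pi u.
Proof.
move=> htu; case: (classic (Def t)) => Ht.
  have Hu := Def_R Ht htu; apply: quot_ext; rewrite !val_pi //.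
  apply: functional_extensionality => v; apply: propositional_extensionality.
  by split; [apply: R_trans (R_sym htu) | apply: R_trans htu].
have Hu : ~ Def u by move=> Hu; apply: Ht (Def_R Hu (R_sym htu)).
by rewrite /pi; do 2 case: excluded_middle_informative.
Qed.

Lemma pi_inj t u : Def t -> Def u -> pi t = pi u -> R t u.
Proof. by move=> Ht Hu /(congr1 (@proj1_sig _ _)); rewrite !val_pi // => ->. Qed.

Lemma pi_repr X : pi (repr X) = X.
Proof. by have [Hr e] := repr_spec X; apply: quot_ext; rewrite val_pi. Qed.

Lemma repr_pi t : Def t -> R (repr (pi t)) t.
Proof. by move=> Ht; apply: pi_inj; rewrite ?pi_repr //; case: (repr_spec (pi t)). Qed.

Lemma quot_ind (P : quot -> Prop) : (forall t, Def t -> P (pi t)) -> forall X, P X.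
Proof. by move=> h X; rewrite -(pi_repr X); apply: h; case: (repr_spec X). Qed.

End Quotient.

(** * The free expansion as a term model *)

Section FreeExpansion.
Variable C : wcat.

Inductive term : Type :=
| tcell of cell C
| torig
| txi of term
| tsrc of term
| ttgt of term
| tidc of term
| tcomp of nat & term & term.

Fixpoint tdim (t : term) : nat :=
  match t with
  | tcell c => dim c
  | torig => 0
  | txi t | tidc t => (tdim t).+1
  | tsrc t | ttgt t => (tdim t).-1
  | tcomp _ _ x => tdim x
  end.

Definition tsI i t := iter (tdim t - i) tsrc t.
Definition ttI i t := iter (tdim t - i) ttgt t.
Definition tidn n t := iter (n - tdim t) tidc t.

Fixpoint twhisk N c x k :=
  match k with
  | 0 => tidn N c
  | k'.+1 => tcomp k' (twhisk N c x k') (tidn N (txi (tsI k' x)))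
  end.

Fixpoint eval (E : expansion) (f : wfunctor C (U E)) (t : term) : cell E :=
  match t with
  | tcell c => f c
  | torig => orig E
  | txi t => xi (eval f t)
  | tsrc t => src (eval f t)
  | ttgt t => tgt (eval f t)
  | tidc t => idc (eval f t)
  | tcomp p y x => comp p (eval f y) (eval f x)
  end.

(* Quantifying over all expansions, including the one built below, is
   harmless since [teq] lands in the impredicative [Prop]. *)
Definition teq t u := tdim t = tdim u /\ forall E (f : wfunctor C (U E)), eval f t = eval f u.

Definition tcomposable p x y := [/\ tdim x = tdim y, p < tdim x & teq (ttI p x) (tsI p y)].

Inductive defined : term -> Prop :=
| def_cell c : defined (tcell c)
| def_orig : defined torig
| def_xi t : defined t -> defined (txi t)
| def_src t : defined t -> 0 < tdim t -> defined (tsrc t)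
| def_tgt t : defined t -> 0 < tdim t -> defined (ttgt t)
| def_idc t : defined t -> defined (tidc t)
| def_comp p x y : defined x -> defined y -> tcomposable p x y -> defined (tcomp p y x)
| def_teq t u : defined t -> teq t u -> defined u.

Lemma teq_refl t : teq t t.
Proof. by []. Qed.
Lemma teq_sym t u : teq t u -> teq u t.
Proof. by case=> d e; split=> // E f; rewrite e. Qed.
Lemma teq_trans t u v : teq t u -> teq u v -> teq t v.
Proof. by case=> d e [d' e']; split=> [|E f]; rewrite ?d ?e. Qed.

Lemma tdim_iter_src k t : tdim (iter k tsrc t) = tdim t - k.
Proof. by elim: k => [|k IH] /=; rewrite ?subn0 // IH subnS. Qed.
Lemma tdim_iter_tgt k t : tdim (iter k ttgt t) = tdim t - k.
Proof. by elim: k => [|k IH] /=; rewrite ?subn0 // IH subnS. Qed.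
Lemma tdim_tsI i t : i <= tdim t -> tdim (tsI i t) = i.
Proof. by move=> h; rewrite /tsI tdim_iter_src; lia. Qed.
Lemma tdim_ttI i t : i <= tdim t -> tdim (ttI i t) = i.
Proof. by move=> h; rewrite /ttI tdim_iter_tgt; lia. Qed.
Lemma tdim_tidn n t : tdim t <= n -> tdim (tidn n t) = n.
Proof.
have -> : forall k, tdim (iter k tidc t) = tdim t + k.
  by elim=> [|k IH] /=; rewrite ?addn0 // IH addnS.
by move=> h; lia.
Qed.
Lemma tdim_twhisk N c x k : tdim c <= N -> k <= N -> k <= tdim x ->
  tdim (twhisk N c x k) = N.
Proof. by case: k => [|k] h1 h2 h3; rewrite /= tdim_tidn //= tdim_tsI //; lia. Qed.

Section Evaluation.
Variables (E : expansion) (f : wfunctor C (U E)).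

Lemma eval_tsI i t : dim (eval f t) = tdim t -> eval f (tsI i t) = sI i (eval f t).
Proof. by move=> h; rewrite /tsI /sI h; elim: (_ - i) => //= k ->. Qed.
Lemma eval_ttI i t : dim (eval f t) = tdim t -> eval f (ttI i t) = tI i (eval f t).
Proof. by move=> h; rewrite /ttI /tI h; elim: (_ - i) => //= k ->. Qed.
Lemma eval_tidn n t : dim (eval f t) = tdim t -> eval f (tidn n t) = idn n (eval f t).
Proof. by move=> h; rewrite /tidn /idn h; elim: (_ - _) => //= k ->. Qed.

Lemma eval_twhisk N c x k : dim (eval f c) = tdim c -> dim (eval f x) = tdim x ->
  k <= tdim x -> eval f (twhisk N c x k) = whisk (@xi E) N (eval f c) (eval f x) k.
Proof.
move=> hc hx; elim: k => [|k IH] hk /=; first by rewrite eval_tidn.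
have hs : dim (eval f (tsI k x)) = tdim (tsI k x).
  by rewrite eval_tsI // dim_sI ?tdim_tsI ?hx //; lia.
rewrite IH ?eval_tidn; last lia; last by rewrite /= (dim_xi (exp_ax E)) hs.
by rewrite /= eval_tsI.
Qed.

Lemma composable_eval_dims p x y : dim (eval f x) = tdim x -> dim (eval f y) = tdim y ->
  tcomposable p x y -> composable p (eval f x) (eval f y).
Proof.
by move=> hx hy [d lt [_ e]]; split; [|split]; rewrite ?hx ?hy // -eval_ttI // -eval_tsI.
Qed.

Lemma dim_eval t : defined t -> dim (eval f t) = tdim t.
Proof.
elim=> {t} /=.
- by move=> c; case: (wfun_ax f).
- exact: dim_orig (exp_ax E).
- by move=> t _ IH; rewrite (dim_xi (exp_ax E)) IH.
- by move=> t _ IH h; rewrite dim_src ?IH.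
- by move=> t _ IH h; rewrite dim_tgt ?IH.
- by move=> t _ IH; rewrite dim_idc IH.
- by move=> p x y _ IHx _ IHy hc; rewrite dim_comp ?IHx //; apply: composable_eval_dims.
- by move=> t u _ IH [d e]; rewrite -e IH.
Qed.

Lemma composable_eval p x y : defined x -> defined y ->
  tcomposable p x y -> composable p (eval f x) (eval f y).
Proof. by move=> hx hy; apply: composable_eval_dims; apply: dim_eval. Qed.

End Evaluation.

Lemma defined_iter_src k t : defined t -> k <= tdim t -> defined (iter k tsrc t).
Proof.
move=> h; elim: k => [|k IH] hk //=.
by apply: def_src; rewrite ?tdim_iter_src; [apply: IH | ]; lia.
Qed.
Lemma defined_iter_tgt k t : defined t -> k <= tdim t -> defined (iter k ttgt t).
Proof.
move=> h; elim: k => [|k IH] hk //=.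
by apply: def_tgt; rewrite ?tdim_iter_tgt; [apply: IH | ]; lia.
Qed.
Lemma defined_tsI i t : defined t -> defined (tsI i t).
Proof. by move=> h; apply: defined_iter_src => //; lia. Qed.
Lemma defined_ttI i t : defined t -> defined (ttI i t).
Proof. by move=> h; apply: defined_iter_tgt => //; lia. Qed.
Lemma defined_tidn n t : defined t -> defined (tidn n t).
Proof. by move=> h; rewrite /tidn; elim: (_ - _) => //= k; apply: def_idc. Qed.

Definition fcell := quot teq defined.
Definition fpi : term -> fcell := pi teq def_orig.

Lemma fpi_eq t u : teq t u -> fpi t = fpi u.
Proof. exact: pi_eq teq_sym teq_trans def_teq def_orig t u. Qed.
Lemma fpi_inj t u : defined t -> defined u -> fpi t = fpi u -> teq t u.
Proof. exact: (@pi_inj _ _ _ _ teq_refl def_orig). Qed.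
Lemma repr_fpi t : defined t -> teq (repr (fpi t)) t.
Proof. exact: repr_pi teq_refl def_orig t. Qed.
Lemma fcell_ind (P : fcell -> Prop) : (forall t, defined t -> P (fpi t)) -> forall X, P X.
Proof. exact: quot_ind. Qed.

Definition free_wdata : wdata := {|
  cell := fcell;
  dim X := tdim (repr X);
  src X := fpi (tsrc (repr X));
  tgt X := fpi (ttgt (repr X));
  idc X := fpi (tidc (repr X));
  comp p Y X := fpi (tcomp p (repr Y) (repr X)) |}.
Local Notation F := free_wdata.

Definition fxi (X : fcell) : fcell := fpi (txi (repr X)).

Lemma dim_fpi t : defined t -> @dim F (fpi t) = tdim t.
Proof. by case/repr_fpi. Qed.
Lemma src_fpi t : defined t -> @src F (fpi t) = fpi (tsrc t).
Proof. by case/repr_fpi=> d e; apply: fpi_eq; split=> [|E f] /=; rewrite ?d ?e. Qed.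
Lemma tgt_fpi t : defined t -> @tgt F (fpi t) = fpi (ttgt t).
Proof. by case/repr_fpi=> d e; apply: fpi_eq; split=> [|E f] /=; rewrite ?d ?e. Qed.
Lemma idc_fpi t : defined t -> @idc F (fpi t) = fpi (tidc t).
Proof. by case/repr_fpi=> d e; apply: fpi_eq; split=> [|E f] /=; rewrite ?d ?e. Qed.
Lemma fxi_fpi t : defined t -> fxi (fpi t) = fpi (txi t).
Proof. by case/repr_fpi=> d e; apply: fpi_eq; split=> [|E f] /=; rewrite ?d ?e. Qed.
Lemma comp_fpi p y x : defined y -> defined x ->
  @comp F p (fpi y) (fpi x) = fpi (tcomp p y x).
Proof.
move=> /repr_fpi [dy ey] /repr_fpi [dx ex].
by apply: fpi_eq; split=> [|E f] /=; rewrite ?dx ?ex ?ey.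
Qed.

Lemma sI_fpi i t : defined t -> @sI F i (fpi t) = fpi (tsI i t).
Proof.
move=> h; rewrite /sI /tsI dim_fpi //.
have : tdim t - i <= tdim t by lia.
elim: (tdim t - i) => [|k IH] hk //.
rewrite !iterS IH; last lia.
by rewrite src_fpi //; apply: defined_iter_src => //; lia.
Qed.
Lemma tI_fpi i t : defined t -> @tI F i (fpi t) = fpi (ttI i t).
Proof.
move=> h; rewrite /tI /ttI dim_fpi //.
have : tdim t - i <= tdim t by lia.
elim: (tdim t - i) => [|k IH] hk //.
rewrite !iterS IH; last lia.
by rewrite tgt_fpi //; apply: defined_iter_tgt => //; lia.
Qed.
Lemma idn_fpi n t : defined t -> @idn F n (fpi t) = fpi (tidn n t).
Proof.
move=> h; rewrite /idn /tidn dim_fpi //.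
elim: (n - tdim t) => [|k IH] //.
by rewrite !iterS IH idc_fpi //; elim: k {IH} => //= k; apply: def_idc.
Qed.

Lemma composable_fpi p x y : defined x -> defined y ->
  @composable F p (fpi x) (fpi y) <-> tcomposable p x y.
Proof.
move=> hx hy; rewrite /composable !dim_fpi // tI_fpi // sI_fpi //.
split=> [[d [lt e]] | [d lt e]]; last by split; [|split]; rewrite // (fpi_eq e).
by split=> //; apply: fpi_inj e; [apply: defined_ttI | apply: defined_tsI].
Qed.

Lemma free_dim_bd (X : fcell) : 0 < @dim F X ->
  @dim F (@src F X) = (@dim F X).-1 /\ @dim F (@tgt F X) = (@dim F X).-1.
Proof.
elim/fcell_ind: X => t Ht; rewrite dim_fpi // => h.
by rewrite src_fpi // tgt_fpi // (dim_fpi (def_src Ht h)) (dim_fpi (def_tgt Ht h)).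
Qed.

Lemma free_globular (X : fcell) : 1 < @dim F X ->
  @src F (@src F X) = @src F (@tgt F X) /\ @tgt F (@src F X) = @tgt F (@tgt F X).
Proof.
elim/fcell_ind: X => t Ht; rewrite dim_fpi // => h.
have h0 : 0 < tdim t by lia.
have Hs := def_src Ht h0; have Ht' := def_tgt Ht h0.
rewrite src_fpi // tgt_fpi // !src_fpi // !tgt_fpi //.
split; apply: fpi_eq; split=> // E f /=; [apply: src_src | apply: tgt_src];
  by rewrite dim_eval.
Qed.

Lemma free_idc (U : fcell) :
  @dim F (@idc F U) = (@dim F U).+1 /\ @src F (@idc F U) = U /\ @tgt F (@idc F U) = U.
Proof.
elim/fcell_ind: U => t Ht; have Hi := def_idc Ht.
rewrite idc_fpi // !dim_fpi // src_fpi // tgt_fpi //.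
by split=> //; split; apply: fpi_eq; split=> // E f /=; rewrite ?src_idc ?tgt_idc.
Qed.

Lemma free_dim_comp p (X Y : fcell) : @composable F p X Y -> @dim F (@comp F p Y X) = @dim F X.
Proof.
elim/fcell_ind: X => x Hx; elim/fcell_ind: Y => y Hy /(composable_fpi p Hx Hy) hc.
by rewrite comp_fpi // !dim_fpi //; apply: def_comp.
Qed.

Lemma free_bd_comp_top p (X Y : fcell) : @composable F p X Y -> @dim F X = p.+1 ->
  @src F (@comp F p Y X) = @src F X /\ @tgt F (@comp F p Y X) = @tgt F Y.
Proof.
elim/fcell_ind: X => x Hx; elim/fcell_ind: Y => y Hy /(composable_fpi p Hx Hy) hc.
rewrite dim_fpi // => hd; have [d _ _] := hc.
rewrite comp_fpi // !src_fpi ?tgt_fpi //; try exact: def_comp.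
split; apply: fpi_eq; split=> [|E f] /=; rewrite ?d //.
  by rewrite src_comp_top ?dim_eval //; apply: composable_eval.
by rewrite tgt_comp_top ?dim_eval //; apply: composable_eval.
Qed.

Lemma free_bd_comp p (X Y : fcell) : @composable F p X Y -> p.+1 < @dim F X ->
  @src F (@comp F p Y X) = @comp F p (@src F Y) (@src F X) /\
  @tgt F (@comp F p Y X) = @comp F p (@tgt F Y) (@tgt F X).
Proof.
elim/fcell_ind: X => x Hx; elim/fcell_ind: Y => y Hy /(composable_fpi p Hx Hy) hc.
rewrite dim_fpi // => hd; have [d _ _] := hc.
have hx : 0 < tdim x by lia.
have hy : 0 < tdim y by lia.
have := def_src Hx hx; have := def_tgt Hx hx; have := def_src Hy hy; have := def_tgt Hy hy.
move=> Hty Hsy Htx Hsx; have Hc := def_comp Hx Hy hc.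
rewrite comp_fpi // src_fpi // tgt_fpi // !src_fpi // !tgt_fpi // !comp_fpi //.
split; apply: fpi_eq; split=> [|E f] //=.
  by rewrite src_comp ?dim_eval //; apply: composable_eval.
by rewrite tgt_comp ?dim_eval //; apply: composable_eval.
Qed.

Lemma free_comp_idn p (X : fcell) : p < @dim F X ->
  @comp F p X (@idn F (@dim F X) (@sI F p X)) = X /\
  @comp F p (@idn F (@dim F X) (@tI F p X)) X = X.
Proof.
elim/fcell_ind: X => x Hx; rewrite dim_fpi // => h.
have Hs := defined_tsI p Hx; have Ht := defined_ttI p Hx.
have := defined_tidn (tdim x) Hs; have := defined_tidn (tdim x) Ht => Hit His.
rewrite sI_fpi // tI_fpi // !idn_fpi // !comp_fpi //.
split; apply: fpi_eq; split=> [|E f] /=; rewrite ?tdim_tidn ?tdim_tsI ?tdim_ttI //; try lia.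
  rewrite (eval_tidn _ (dim_eval f Hs)) (eval_tsI _ (dim_eval f Hx)) -(dim_eval f Hx).
  by rewrite comp_idn_r // dim_eval.
rewrite (eval_tidn _ (dim_eval f Ht)) (eval_ttI _ (dim_eval f Hx)) -(dim_eval f Hx).
by rewrite comp_idn_l // dim_eval.
Qed.

Lemma free_compA p (X Y Z : fcell) : @composable F p X Y -> @composable F p Y Z ->
  @comp F p Z (@comp F p Y X) = @comp F p (@comp F p Z Y) X.
Proof.
elim/fcell_ind: X => x Hx; elim/fcell_ind: Y => y Hy; elim/fcell_ind: Z => z Hz.
move=> /(composable_fpi p Hx Hy) hxy /(composable_fpi p Hy Hz) hyz.
rewrite !comp_fpi //; try exact: def_comp.
apply: fpi_eq; split=> // E f /=.
by apply: compA; apply: composable_eval.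
Qed.

Lemma free_interchange p q (X X' Y Y' : fcell) : p < q ->
  @composable F q X X' -> @composable F q Y Y' ->
  @composable F p X Y -> @composable F p X' Y' ->
  @comp F p (@comp F q Y' Y) (@comp F q X' X) = @comp F q (@comp F p Y' X') (@comp F p Y X).
Proof.
elim/fcell_ind: X => x Hx; elim/fcell_ind: X' => x' Hx'.
elim/fcell_ind: Y => y Hy; elim/fcell_ind: Y' => y' Hy' hpq.
move=> /(composable_fpi q Hx Hx') h1 /(composable_fpi q Hy Hy') h2.
move=> /(composable_fpi p Hx Hy) h3 /(composable_fpi p Hx' Hy') h4.
rewrite !comp_fpi //; try exact: def_comp.
apply: fpi_eq; split=> // E f /=.
by apply: comp_interchange => //; apply: composable_eval.
Qed.

Lemma free_idc_comp p (X Y : fcell) : @composable F p X Y ->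
  @idc F (@comp F p Y X) = @comp F p (@idc F Y) (@idc F X).
Proof.
elim/fcell_ind: X => x Hx; elim/fcell_ind: Y => y Hy /(composable_fpi p Hx Hy) hc.
have Hc := def_comp Hx Hy hc.
rewrite comp_fpi // !idc_fpi // comp_fpi //; try exact: def_idc.
apply: fpi_eq; split=> // E f /=.
by apply: idc_comp; apply: composable_eval.
Qed.

Lemma free_is_wcat : is_wcat F.
Proof.
split; first exact: free_dim_bd.
split; first exact: free_globular.
split; first exact: free_idc.
split; first exact: free_dim_comp.
split; first exact: free_bd_comp_top.
split; first exact: free_bd_comp.
split; first exact: free_comp_idn.
split; first exact: free_compA.
split; first exact: free_interchange.
exact: free_idc_comp.
Qed.

Definition free_wcat : wcat := WCat free_is_wcat.
Definition forig : fcell := fpi torig.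

Lemma whisk_fpi N c x k : defined c -> defined x ->
  tdim c <= N -> k <= N -> k <= tdim x ->
  (forall E (f : wfunctor C (U E)), whisk_composable (@xi E) N (eval f c) (eval f x) k) ->
  defined (twhisk N c x k) /\ @whisk F fxi N (fpi c) (fpi x) k = fpi (twhisk N c x k).
Proof.
move=> Hc Hx hc; elim: k => [|k IH] hN hk hE; first by rewrite /= idn_fpi //; split=> //; apply: defined_tidn.
have [HW eW] := IH ltac:(lia) ltac:(lia) (fun E f => whisk_composable_le (leqnSn k) (hE E f)).
have Hs := defined_tsI k Hx.
have HX := def_xi Hs; have HZ := defined_tidn N HX.
have dW : tdim (twhisk N c x k) = N by apply: tdim_twhisk; lia.
have dZ : tdim (tidn N (txi (tsI k x))) = N by rewrite tdim_tidn //= tdim_tsI; lia.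
rewrite whiskS eW sI_fpi // fxi_fpi // idn_fpi // comp_fpi //; split=> //.
apply: def_comp => //; split; rewrite ?dZ ?dW //.
split=> [|E f]; first by rewrite tdim_ttI ?tdim_tsI ?dZ ?dW //; lia.
rewrite (eval_ttI _ (dim_eval f HZ)) (eval_tsI _ (dim_eval f HW)).
rewrite (eval_tidn _ (dim_eval f HX)) /= (eval_tsI _ (dim_eval f Hx)).
rewrite eval_twhisk ?dim_eval //; last lia.
by case: (hE E f k (ltnSn k)) => _ [].
Qed.

Lemma free_dim_xi (X : fcell) : @dim F (fxi X) = (@dim F X).+1.
Proof. by elim/fcell_ind: X => x Hx; rewrite fxi_fpi // !dim_fpi //; apply: def_xi. Qed.

Lemma free_src_xi (X : fcell) : 0 < @dim F X -> @src F (fxi X) = fxi (@tgt F X).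
Proof.
elim/fcell_ind: X => x Hx; rewrite dim_fpi // => h.
have HX := def_xi Hx; have Ht := def_tgt Hx h.
rewrite fxi_fpi // src_fpi // tgt_fpi // fxi_fpi //.
apply: fpi_eq; split=> [|E f] /=; first lia.
by rewrite (src_xi (exp_ax E)) ?dim_eval.
Qed.

Lemma free_tgt_xi (X : fcell) : @tgt F (fxi X) = @whisk F fxi (@dim F X) X X (@dim F X).
Proof.
elim/fcell_ind: X => x Hx; rewrite dim_fpi //.
have hE E (f : wfunctor C (U E)) :
    whisk_composable (@xi E) (tdim x) (eval f x) (eval f x) (tdim x).
  by rewrite -(dim_eval f Hx); apply: (whisk_composable_of_sI (exp_ax E)).
have [Hw ->] := whisk_fpi Hx Hx (leqnn _) (leqnn _) (leqnn _) hE.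
rewrite fxi_fpi // tgt_fpi; last exact: def_xi.
apply: fpi_eq; split=> [|E f] /=; first by rewrite tdim_twhisk.
by rewrite (tgt_xi (exp_ax E)) eval_twhisk ?(dim_eval f Hx).
Qed.

Lemma free_xi0 (X : fcell) : @dim F X = 0 -> @src F (fxi X) = forig /\ @tgt F (fxi X) = X.
Proof.
move=> h; split; last by rewrite free_tgt_xi h; apply: (idn_small (D := free_wcat)); rewrite h.
move: h; elim/fcell_ind: X => x Hx; rewrite dim_fpi // => h.
rewrite fxi_fpi // src_fpi; last exact: def_xi.
apply: fpi_eq; split=> [|E f] /=; first by rewrite h.
by rewrite (src_xi0 (exp_ax E)) ?dim_eval.
Qed.

Section CompositeExpansion.
Variables (p : nat) (x y : term).
Hypotheses (Hx : defined x) (Hy : defined y) (hc : tcomposable p x y).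

Let c := ttI p.+1 y.
Let W := twhisk (tdim x).+1 c x p.

Let hE E (f : wfunctor C (U E)) :=
  xi_comp_composable (exp_ax E) (composable_eval f Hx Hy hc).

Lemma eval_whisk_comp E (f : wfunctor C (U E)) :
  eval f W = whisk (@xi E) (dim (eval f x)).+1 (tI p.+1 (eval f y)) (eval f x) p.
Proof.
have [_ lt _] := hc.
rewrite (eval_twhisk _ (dim_eval f (defined_ttI _ Hy)) (dim_eval f Hx) (ltnW lt)).
by rewrite (eval_ttI _ (dim_eval f Hy)) (dim_eval f Hx).
Qed.

Lemma whisk_comp_fpi : defined W /\ @whisk F fxi (tdim x).+1 (fpi c) (fpi x) p = fpi W.
Proof.
have [d lt _] := hc.
apply: whisk_fpi; [exact: defined_ttI | exact: Hx | rewrite tdim_ttI; lia | lia | lia |].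
by move=> E f; rewrite eval_ttI ?dim_eval // -(dim_eval f Hx); case: (hE f).
Qed.

Lemma defined_whisk_comp_xi : defined (tcomp p W (txi x)).
Proof.
have [d lt _] := hc; have [HW _] := whisk_comp_fpi.
have dW : tdim W = (tdim x).+1 by rewrite tdim_twhisk ?tdim_ttI //; lia.
apply: (def_comp (def_xi Hx) HW); split=> /=; [by rewrite dW | exact: ltnW | split].
  by rewrite tdim_ttI /= ?tdim_tsI ?dW; lia.
move=> E f; rewrite (eval_ttI _ (dim_eval f (def_xi Hx))) (eval_tsI _ (dim_eval f HW)) /=.
by rewrite eval_whisk_comp; case: (hE f) => _ [_ []].
Qed.

End CompositeExpansion.

Lemma free_xi_comp p (X Y : fcell) : @composable F p X Y ->
  fxi (@comp F p Y X) =
  @comp F p.+1 (@comp F p (@whisk F fxi (@dim F X).+1 (@tI F p.+1 Y) X p) (fxi X)) (fxi Y).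
Proof.
elim/fcell_ind: X => x Hx; elim/fcell_ind: Y => y Hy /(composable_fpi p Hx Hy) hc.
have [d _ _] := hc; have [HW eW] := whisk_comp_fpi Hx Hy hc.
have Hc := def_comp Hx Hy hc; have HXW := defined_whisk_comp_xi Hx Hy hc.
have HXx := def_xi Hx; have HXy := def_xi Hy.
(* [comp_fpi] is instantiated by hand: [comp] on [F] unfolds to an [fpi], so
   a bare pattern would match the wrong subterm. *)
rewrite dim_fpi // tI_fpi // eW (comp_fpi _ Hy Hx) !fxi_fpi //.
rewrite (comp_fpi _ HW HXx) (comp_fpi _ HXW HXy).
apply: fpi_eq; split=> [|E f] /=; first by rewrite d.
by rewrite (xi_comp (exp_ax E)) ?eval_whisk_comp //; apply: composable_eval.
Qed.

Lemma free_xi_idc (U : fcell) : fxi (@idc F U) = @idc F (fxi U).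
Proof.
elim/fcell_ind: U => u Hu; have Hi := def_idc Hu; have HX := def_xi Hu.
rewrite (idc_fpi Hu) (fxi_fpi Hi) (fxi_fpi Hu) (idc_fpi HX).
by apply: fpi_eq; split=> // E f /=; rewrite (xi_idc (exp_ax E)).
Qed.

Lemma free_xi_xi (U : fcell) : fxi (fxi U) = @idc F (fxi U).
Proof.
elim/fcell_ind: U => u Hu; have HX := def_xi Hu.
rewrite (fxi_fpi Hu) (fxi_fpi HX) (idc_fpi HX).
by apply: fpi_eq; split=> // E f /=; rewrite (xi_xi (exp_ax E)).
Qed.

Lemma free_xi_orig : fxi forig = @idc F forig.
Proof.
rewrite /forig (fxi_fpi def_orig) (idc_fpi def_orig).
by apply: fpi_eq; split=> // E f /=; rewrite (xi_orig (exp_ax E)).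
Qed.

Lemma free_is_expansion : is_expansion (C := free_wcat) forig fxi.
Proof.
split; first exact: dim_fpi def_orig.
split; first exact: free_dim_xi.
split; first by move=> X /free_xi0.
split; first by move=> X h; rewrite free_src_xi // free_tgt_xi.
split; first exact: free_xi_comp.
split; first exact: free_xi_idc.
split; first exact: free_xi_xi.
exact: free_xi_orig.
Qed.

Definition free_expansion : expansion := Expansion free_is_expansion.

Lemma free_unit_is_wfunctor : is_wfunctor (C := C) (D := free_wcat) (fun c => fpi (tcell c)).
Proof.
split; first by move=> c; rewrite dim_fpi //; apply: def_cell.
split.
  move=> c h; rewrite (src_fpi (def_cell c)) (tgt_fpi (def_cell c)).
  split; apply: fpi_eq; split=> [|E f] /=; rewrite ?dim_src ?dim_tgt //;
    by case: (wfun_ax f) => _ [/(_ c h) []].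
split.
  move=> u; rewrite (idc_fpi (def_cell u)); apply: fpi_eq; split=> [|E f] /=.
    exact: dim_idc.
  by case: (wfun_ax f) => _ [_ [->]].
move=> p x y hc; rewrite (comp_fpi _ (def_cell y) (def_cell x)).
apply: fpi_eq; split=> [|E f] /=; first exact: dim_comp.
by case: (wfun_ax f) => _ [_ [_ ->]].
Qed.

Definition free_unit : wfunctor C (U free_expansion) := WFun free_unit_is_wfunctor.

Section UniversalProperty.
Variables (E : expansion) (f : wfunctor C (U E)).

Definition free_lift (X : fcell) : cell E := eval f (repr X).

Lemma free_lift_fpi t : defined t -> free_lift (fpi t) = eval f t.
Proof. by case/repr_fpi => _ e; apply: e. Qed.

Lemma free_lift_is_wfunctor : is_wfunctor (C := free_wcat) (D := U E) free_lift.
Proof.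
split; first by elim/fcell_ind => t Ht; rewrite free_lift_fpi // dim_fpi // dim_eval.
split.
  elim/fcell_ind => t Ht; rewrite dim_fpi // => h.
  by rewrite src_fpi // tgt_fpi // !free_lift_fpi //; [apply: def_tgt | apply: def_src].
split; first by elim/fcell_ind => t Ht; rewrite idc_fpi // !free_lift_fpi //; apply: def_idc.
move=> p; elim/fcell_ind => x Hx; elim/fcell_ind => y Hy /(composable_fpi p Hx Hy) hc.
by rewrite comp_fpi // !free_lift_fpi //; apply: def_comp.
Qed.

Definition free_lift_wfunctor : wfunctor (U free_expansion) (U E) := WFun free_lift_is_wfunctor.

Lemma free_lift_orig : free_lift_wfunctor (orig free_expansion) = orig E.
Proof. exact: free_lift_fpi def_orig. Qed.

Lemma free_lift_xi (X : cell free_expansion) : free_lift_wfunctor (xi X) = xi (free_lift_wfunctor X).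
Proof.
by elim/fcell_ind: X => t Ht; rewrite /= fxi_fpi // !free_lift_fpi //; apply: def_xi.
Qed.

Definition free_lift_mor : expmor free_expansion E :=
  @ExpMor _ _ free_lift_wfunctor free_lift_orig free_lift_xi.

Lemma free_lift_unit c : free_lift_mor (free_unit c) = f c.
Proof. exact: free_lift_fpi (def_cell c). Qed.

Lemma free_lift_unique (g : expmor free_expansion E) :
  (forall c, g (free_unit c) = f c) -> forall X, g X = free_lift_mor X.
Proof.
move=> hg; have [_ [hbd [hidc hcomp]]] := wfun_ax g.
suff gE t : defined t -> g (fpi t) = eval f t.
  by elim/fcell_ind => t Ht; rewrite gE // /= free_lift_fpi.
elim=> {t}.
- exact: hg.
- exact: emor_orig g.
- by move=> t Ht IH; rewrite -fxi_fpi // emor_xi IH.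
- by move=> t Ht IH h; rewrite -src_fpi // (hbd _ _).1 ?IH ?dim_fpi.
- by move=> t Ht IH h; rewrite -tgt_fpi // (hbd _ _).2 ?IH ?dim_fpi.
- by move=> t Ht IH; rewrite -idc_fpi // hidc IH.
- move=> p x y Hx IHx Hy IHy hc.
  by rewrite -comp_fpi // hcomp ?IHx ?IHy //; apply/composable_fpi.
- by move=> t u Ht IH [d e]; rewrite -(fpi_eq (conj d e)) IH e.
Qed.

End UniversalProperty.
End FreeExpansion.

Theorem mainTheorem2 :
  forall C : wcat,
  exists (FC : expansion) (eta : wfunctor C (U FC)),
  forall (E : expansion) (f : wfunctor C (U E)),
  exists g : expmor FC E,
    (forall x, g (eta x) = f x) /\
    (forall g' : expmor FC E, (forall x, g' (eta x) = f x) ->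
       forall y, g' y = g y).
Proof.
move=> C; exists (free_expansion C), (free_unit C) => E f.
exists (free_lift_mor f); split; first exact: free_lift_unit.
exact: free_lift_unique.
Qed.
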